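(* Let $A$ be a weak bimonoid in a duoidal category $(\mathcal M,\circ,I,\bullet,J)$. For each object $M$ put $\psi_M:=((M\circ A)\bullet\mu)\cdot\zeta_{M,A,A,A}\cdot((M\bullet A)\circ\Delta):(M\bullet A)\circ A\to(M\circ A)\bullet A$. Then $\psi$ is a weak mixed distributive law between the monad $(-)\circ A$ and the comonad $(-)\bullet A$ on $\mathcal M$; that is, $\psi$ is natural and for every object $M$: (i) $((M\circ\mu)\bullet A)\cdot\psi_{M\circ A}\cdot(\psi_M\circ A)=\psi_M\cdot((M\bullet A)\circ\mu)$; (ii) $\psi_M\cdot((M\bullet A)\circ\eta)=((M\circ A)\bullet\varepsilon\bullet A)\cdot(\psi_M\bullet A)\cdot(((M\bullet A)\circ\eta)\bullet A)\cdot(M\bullet\Delta)$; (iii) $(\psi_M\bullet A)\cdot\psi_{M\bullet A}\cdot((M\bullet\Delta)\circ A)=((M\circ A)\bullet\Delta)\cdot\psi_M$; (iv) $((M\circ A)\bullet\varepsilon)\cdot\psi_M=(M\circ\mu)\cdot(((M\circ A)\bullet\varepsilon)\circ A)\cdot(\psi_M\circ A)\cdot((M\bullet A)\circ\eta\circ A)$.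
   Context: Composition of morphisms is written $g\cdot f$ ($f$ first). Associativity and unit isomorphisms of both monoidal products are suppressed. A duoidal category $(\mathcal M,\circ,I,\bullet,J)$ is a category $\mathcal M$ with two monoidal structures $(\circ,I)$ and $(\bullet,J)$, morphisms $\delta:I\to I\bullet I$, $\varpi:J\circ J\to J$, $\tau:I\to J$, and a natural transformation $\zeta_{A,B,C,D}:(A\bullet B)\circ(C\bullet D)\to(A\circ C)\bullet(B\circ D)$ such that: $(J,\varpi,\tau)$ is a monoid in $(\mathcal M,\circ,I)$; $(I,\delta,\tau)$ is a comonoid in $(\mathcal M,\bullet,J)$; for all objects, $\zeta_{A,B,C\circ E,D\circ F}\cdot((A\bullet B)\circ\zeta_{C,D,E,F})=\zeta_{A\circ C,B\circ D,E,F}\cdot(\zeta_{A,B,C,D}\circ(E\bullet F))$ and $((A\circ D)\bullet\zeta_{B,C,E,F})\cdot\zeta_{A,B\bullet C,D,E\bullet F}=(\zeta_{A,B,D,E}\bullet(C\circ F))\cdot\zeta_{A\bullet B,C,D\bullet E,F}$; and $\zeta_{I,I,A,B}\cdot(\delta\circ(A\bullet B))=\mathrm{id}=\zeta_{A,B,I,I}\cdot((A\bullet B)\circ\delta)$, $(\varpi\bullet(A\circ B))\cdot\zeta_{J,A,J,B}=\mathrm{id}=((A\circ B)\bullet\varpi)\cdot\zeta_{A,J,B,J}$. A weak bimonoid is an object $A$ with a monoid structure $(\mu,\eta)$ in $(\mathcal M,\circ,I)$ and a comonoid structure $(\Delta,\varepsilon)$ in $(\mathcal M,\bullet,J)$ satisfying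 the following nine axioms, with $e:=\Delta\cdot\eta$ and $\bar\mu:=\varepsilon\cdot\mu$: (WB) $\Delta\cdot\mu=(\mu\bullet\mu)\cdot\zeta_{A,A,A,A}\cdot(\Delta\circ\Delta)$. (RRU) $(I\bullet A\bullet\mu\bullet A)\cdot(\zeta_{I,A,I\bullet A,A}\bullet A)\cdot(((I\bullet A)\circ(I\bullet e))\bullet A)\cdot(((I\bullet A)\circ\delta)\bullet A)\cdot(I\bullet e)\cdot\delta=(I\bullet A\bullet\Delta)\cdot(I\bullet\Delta)\cdot(I\bullet\eta)\cdot\delta$. (RLU) $(I\bullet A\bullet\mu\bullet A)\cdot(\zeta_{I\bullet A,A,I,A}\bullet A)\cdot(((I\bullet e)\circ(I\bullet A))\bullet A)\cdot((\delta\circ(I\bullet A))\bullet A)\cdot(I\bullet e)\cdot\delta=(I\bullet A\bullet\Delta)\cdot(I\bullet\Delta)\cdot(I\bullet\eta)\cdot\delta$. (LRU) $(A\bullet\mu\bullet A\bullet I)\cdot(A\bullet\zeta_{A,I,A,A\bullet I})\cdot(A\bullet((A\bullet I)\circ(e\bullet I)))\cdot(A\bullet((A\bullet I)\circ\delta))\cdot(e\bullet I)\cdot\delta=(\Delta\bullet A\bullet I)\cdot(\Delta\bullet I)\cdot(\eta\bullet I)\cdot\delta$. (LLU) $(A\bullet\mu\bullet A\bullet I)\cdot(A\bullet\zeta_{A,A\bullet I,A,I})\cdot(A\bullet((e\bullet I)\circ(A\bullet I)))\cdot(A\bullet(\delta\circ(A\bullet I)))\cdot(e\bullet I)\cdot\delta=(\Delta\bullet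 A\bullet I)\cdot(\Delta\bullet I)\cdot(\eta\bullet I)\cdot\delta$. (LRC) $\varpi\cdot(J\circ\bar\mu)\cdot((\varpi\bullet(J\circ A))\circ A)\cdot(((J\circ\bar\mu)\bullet(J\circ A))\circ A)\cdot(\zeta_{J\circ A,J,A,A}\circ A)\cdot(J\circ A\circ\Delta\circ A)=\varpi\cdot(J\circ\varepsilon)\cdot(J\circ\mu)\cdot(J\circ A\circ\mu)$. (LLC) $\varpi\cdot(J\circ\bar\mu)\cdot(((J\circ A)\bullet\varpi)\circ A)\cdot(((J\circ A)\bullet(J\circ\bar\mu))\circ A)\cdot(\zeta_{J,J\circ A,A,A}\circ A)\cdot(J\circ A\circ\Delta\circ A)=\varpi\cdot(J\circ\varepsilon)\cdot(J\circ\mu)\cdot(J\circ A\circ\mu)$. (RRC) $\varpi\cdot(\bar\mu\circ J)\cdot(A\circ(\varpi\bullet(A\circ J)))\cdot(A\circ((\bar\mu\circ J)\bullet(A\circ J)))\cdot(A\circ\zeta_{A,A,A\circ J,J})\cdot(A\circ\Delta\circ A\circ J)=\varpi\cdot(\varepsilon\circ J)\cdot(\mu\circ J)\cdot(\mu\circ A\circ J)$. (RLC) $\varpi\cdot(\bar\mu\circ J)\cdot(A\circ((A\circ J)\bullet\varpi))\cdot(A\circ((A\circ J)\bullet(\bar\mu\circ J)))\cdot(A\circ\zeta_{A,A,J,A\circ J})\cdot(A\circ\Delta\circ A\circ J)=\varpi\cdot(\varepsilon\circ J)\cdot(\mu\circ J)\cdot(\mu\circ A\circ J)$. The monad $(-)\circ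 A$ has multiplication $M\circ\mu$ and unit $M\circ\eta$; the comonad $(-)\bullet A$ has comultiplication $M\bullet\Delta$ and counit $M\bullet\varepsilon$. *)

(* Coherence isomorphisms (associators/unitors),
   which the paper suppresses, are inserted explicitly. *)
Set Implicit Arguments.
Unset Strict Implicit.

(* ---------- Categories (g · f = "f first, then g") ---------- *)
Record Cat : Type := {
  ob :> Type;
  hom : ob -> ob -> Type;
  cid : forall a, hom a a;
  comp : forall a b c, hom b c -> hom a b -> hom a c;
  comp_idl : forall a b (f : hom a b), comp (cid b) f = f;
  comp_idr : forall a b (f : hom a b), comp f (cid a) = f;
  comp_assoc : forall a b c d (h : hom c d) (g : hom b c) (f : hom a b),
      comp h (comp g f) = comp (comp h g) f }.
Arguments hom {_} _ _.
Arguments cid {_} _.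
Arguments comp {_ _ _ _} _ _.
Notation "g · f" := (comp g f) (at level 50, left associativity).

Record MonOps (C : Cat) := {
  tens : C -> C -> C;
  tensm : forall a b c d : C, hom a b -> hom c d -> hom (tens a c) (tens b d);
  munit : C;
  asc : forall a b c : C, hom (tens (tens a b) c) (tens a (tens b c));
  asci : forall a b c : C, hom (tens a (tens b c)) (tens (tens a b) c);
  lu : forall a : C, hom (tens munit a) a;
  lui : forall a : C, hom a (tens munit a);
  ru : forall a : C, hom (tens a munit) a;
  rui : forall a : C, hom a (tens a munit) }.
Arguments tens {C} _ _ _.
Arguments tensm {C} _ {a b c d} _ _.
Arguments munit {C} _.
Arguments asc {C} _ _ _ _.
Arguments asci {C} _ _ _ _.
Arguments lu {C} _ _.
Arguments lui {C} _ _.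
Arguments ru {C} _ _.
Arguments rui {C} _ _.

Record MonLaws (C : Cat) (M : MonOps C) : Prop := {
  tensm_id : forall a b : C, tensm M (cid a) (cid b) = cid (tens M a b);
  tensm_comp : forall (a1 a2 a3 b1 b2 b3 : C) (f1 : hom a1 a2) (f2 : hom a2 a3)
      (g1 : hom b1 b2) (g2 : hom b2 b3),
      tensm M (f2 · f1) (g2 · g1) = tensm M f2 g2 · tensm M f1 g1;
  asc_iso1 : forall a b c : C, asci M a b c · asc M a b c = cid _;
  asc_iso2 : forall a b c : C, asc M a b c · asci M a b c = cid _;
  asc_nat : forall (a a' b b' c c' : C) (f : hom a a') (g : hom b b') (h : hom c c'),
      asc M a' b' c' · tensm M (tensm M f g) h = tensm M f (tensm M g h) · asc M a b c;
  lu_iso1 : forall a : C, lui M a · lu M a = cid _;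
  lu_iso2 : forall a : C, lu M a · lui M a = cid _;
  lu_nat : forall (a b : C) (f : hom a b), f · lu M a = lu M b · tensm M (cid (munit M)) f;
  ru_iso1 : forall a : C, rui M a · ru M a = cid _;
  ru_iso2 : forall a : C, ru M a · rui M a = cid _;
  ru_nat : forall (a b : C) (f : hom a b), f · ru M a = ru M b · tensm M f (cid (munit M));
  pentagon : forall a b c d : C,
      asc M a b (tens M c d) · asc M (tens M a b) c d
      = tensm M (cid a) (asc M b c d) · asc M a (tens M b c) d · tensm M (asc M a b c) (cid d);
  triangle : forall a b : C,
      tensm M (cid a) (lu M b) · asc M a (munit M) b = tensm M (ru M a) (cid b) }.

Record Monoidal (C : Cat) := { mops :> MonOps C; mlaws : MonLaws mops }.

Record DuoOps (C : Cat) := {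
  dO : Monoidal C;
  dB : Monoidal C;
  dDelta : hom (munit dO) (tens dB (munit dO) (munit dO));
  dVarpi : hom (tens dO (munit dB) (munit dB)) (munit dB);
  dTau : hom (munit dO) (munit dB);
  dZeta : forall a b c d : C,
      hom (tens dO (tens dB a b) (tens dB c d)) (tens dB (tens dO a c) (tens dO b d)) }.
Arguments dO {C} _.
Arguments dB {C} _.
Arguments dDelta {C} _.
Arguments dVarpi {C} _.
Arguments dTau {C} _.
Arguments dZeta {C} _ _ _ _ _.

Section DuoidalLaws.
Variables (C : Cat) (D : DuoOps C).
Local Notation "a ⊙ b" := (tens (dO D) a b) (at level 40, left associativity).
Local Notation "a ⊛ b" := (tens (dB D) a b) (at level 40, left associativity).
Local Notation "f ⊙' g" := (tensm (dO D) f g) (at level 40, left associativity).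
Local Notation "f ⊛' g" := (tensm (dB D) f g) (at level 40, left associativity).
Local Notation I := (munit (dO D)).
Local Notation J := (munit (dB D)).
Local Notation δ := (dDelta D).
Local Notation ϖ := (dVarpi D).
Local Notation τ := (dTau D).
Local Notation ζ := (dZeta D).

Record DuoLaws : Prop := {
  zeta_nat : forall (a a' b b' c c' d d' : C) (f : hom a a') (g : hom b b')
      (h : hom c c') (k : hom d d'),
      ζ a' b' c' d' · ((f ⊛' g) ⊙' (h ⊛' k)) = ((f ⊙' h) ⊛' (g ⊙' k)) · ζ a b c d;
  varpi_assoc : ϖ · (ϖ ⊙' cid J) = ϖ · (cid J ⊙' ϖ) · asc (dO D) J J J;
  varpi_lunit : ϖ · (τ ⊙' cid J) = lu (dO D) J;
  varpi_runit : ϖ · (cid J ⊙' τ) = ru (dO D) J;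
  delta_coassoc : (δ ⊛' cid I) · δ = asci (dB D) I I I · (cid I ⊛' δ) · δ;
  delta_lcounit : (τ ⊛' cid I) · δ = lui (dB D) I;
  delta_rcounit : (cid I ⊛' τ) · δ = rui (dB D) I;
  zeta_assoc_o : forall a b c d e f : C,
      (asc (dO D) a c e ⊛' asc (dO D) b d f) · ζ (a ⊙ c) (b ⊙ d) e f
        · (ζ a b c d ⊙' cid (e ⊛ f))
      = ζ a b (c ⊙ e) (d ⊙ f) · (cid (a ⊛ b) ⊙' ζ c d e f)
        · asc (dO D) (a ⊛ b) (c ⊛ d) (e ⊛ f);
  zeta_assoc_b : forall a b c d e f : C,
      asc (dB D) (a ⊙ d) (b ⊙ e) (c ⊙ f) · (ζ a b d e ⊛' cid (c ⊙ f))
        · ζ (a ⊛ b) c (d ⊛ e) f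
      = (cid (a ⊙ d) ⊛' ζ b c e f) · ζ a (b ⊛ c) d (e ⊛ f)
        · (asc (dB D) a b c ⊙' asc (dB D) d e f);
  zeta_delta_l : forall a b : C,
      (lu (dO D) a ⊛' lu (dO D) b) · ζ I I a b · (δ ⊙' cid (a ⊛ b)) = lu (dO D) (a ⊛ b);
  zeta_delta_r : forall a b : C,
      (ru (dO D) a ⊛' ru (dO D) b) · ζ a b I I · (cid (a ⊛ b) ⊙' δ) = ru (dO D) (a ⊛ b);
  zeta_varpi_l : forall a b : C,
      lu (dB D) (a ⊙ b) · (ϖ ⊛' cid (a ⊙ b)) · ζ J a J b = lu (dB D) a ⊙' lu (dB D) b;
  zeta_varpi_r : forall a b : C,
      ru (dB D) (a ⊙ b) · (cid (a ⊙ b) ⊛' ϖ) · ζ a J b J = ru (dB D) a ⊙' ru (dB D) b }.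
End DuoidalLaws.

Record Duoidal (C : Cat) := { dops :> DuoOps C; dlaws : DuoLaws dops }.

Section WeakBimonoid.
Variables (C : Cat) (D : Duoidal C).
Local Notation "a ⊙ b" := (tens (dO D) a b) (at level 40, left associativity).
Local Notation "a ⊛ b" := (tens (dB D) a b) (at level 40, left associativity).
Local Notation "f ⊙' g" := (tensm (dO D) f g) (at level 40, left associativity).
Local Notation "f ⊛' g" := (tensm (dB D) f g) (at level 40, left associativity).
Local Notation I := (munit (dO D)).
Local Notation J := (munit (dB D)).
Local Notation δ := (dDelta D).
Local Notation ϖ := (dVarpi D).
Local Notation ζ := (dZeta D).
Local Notation αo := (asc (dO D)).
Local Notation αo' := (asci (dO D)).
Local Notation αb := (asc (dB D)).
Local Notation αb' := (asci (dB D)).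
Local Notation λo := (lu (dO D)).
Local Notation λo' := (lui (dO D)).
Local Notation ρo := (ru (dO D)).
Local Notation ρo' := (rui (dO D)).
Local Notation λb := (lu (dB D)).
Local Notation λb' := (lui (dB D)).
Local Notation ρb := (ru (dB D)).
Local Notation ρb' := (rui (dB D)).

Record WeakBimonoid (A : C) := {
  wμ : hom (A ⊙ A) A;
  wη : hom I A;
  wΔ : hom A (A ⊛ A);
  wε : hom A J;
  mu_assoc : wμ · (wμ ⊙' cid A) = wμ · (cid A ⊙' wμ) · αo A A A;
  mu_lunit : wμ · (wη ⊙' cid A) = λo A;
  mu_runit : wμ · (cid A ⊙' wη) = ρo A;
  Delta_coassoc : (wΔ ⊛' cid A) · wΔ = αb' A A A · (cid A ⊛' wΔ) · wΔ;
  Delta_lcounit : (wε ⊛' cid A) · wΔ = λb' A;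
  Delta_rcounit : (cid A ⊛' wε) · wΔ = ρb' A;
  ax_WB : wΔ · wμ = (wμ ⊛' wμ) · ζ A A A A · (wΔ ⊙' wΔ);
  ax_RRU :
    (((cid (I ⊛ A) ⊛' wμ) · (λo (I ⊛ A) ⊛' cid (A ⊙ A))) ⊛' cid A)
    · (ζ I A (I ⊛ A) A ⊛' cid A)
    · ((cid (I ⊛ A) ⊙' αb' I A A) ⊛' cid A)
    · ((cid (I ⊛ A) ⊙' (cid I ⊛' (wΔ · wη))) ⊛' cid A)
    · ((cid (I ⊛ A) ⊙' δ) ⊛' cid A)
    · (ρo' (I ⊛ A) ⊛' cid A) · αb' I A A
    · (cid I ⊛' (wΔ · wη)) · δ
    = αb' (I ⊛ A) A A · αb' I A (A ⊛ A)
      · (cid I ⊛' (cid A ⊛' wΔ)) · (cid I ⊛' wΔ) · (cid I ⊛' wη) · δ;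
  ax_RLU :
    (((cid (I ⊛ A) ⊛' wμ) · (ρo (I ⊛ A) ⊛' cid (A ⊙ A))) ⊛' cid A)
    · (ζ (I ⊛ A) A I A ⊛' cid A)
    · ((αb' I A A ⊙' cid (I ⊛ A)) ⊛' cid A)
    · (((cid I ⊛' (wΔ · wη)) ⊙' cid (I ⊛ A)) ⊛' cid A)
    · ((δ ⊙' cid (I ⊛ A)) ⊛' cid A)
    · (λo' (I ⊛ A) ⊛' cid A) · αb' I A A
    · (cid I ⊛' (wΔ · wη)) · δ
    = αb' (I ⊛ A) A A · αb' I A (A ⊛ A)
      · (cid I ⊛' (cid A ⊛' wΔ)) · (cid I ⊛' wΔ) · (cid I ⊛' wη) · δ;
  ax_LRU :
    (cid A ⊛' ((wμ ⊛' cid (A ⊛ I)) · (cid (A ⊙ A) ⊛' λo (A ⊛ I))))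
    · (cid A ⊛' ζ A I A (A ⊛ I))
    · (cid A ⊛' (cid (A ⊛ I) ⊙' αb A A I))
    · (cid A ⊛' (cid (A ⊛ I) ⊙' ((wΔ · wη) ⊛' cid I)))
    · (cid A ⊛' (cid (A ⊛ I) ⊙' δ))
    · (cid A ⊛' ρo' (A ⊛ I)) · αb A A I
    · ((wΔ · wη) ⊛' cid I) · δ
    = αb A A (A ⊛ I) · (wΔ ⊛' cid (A ⊛ I)) · αb A A I
      · (wΔ ⊛' cid I) · (wη ⊛' cid I) · δ;
  ax_LLU :
    (cid A ⊛' ((wμ ⊛' cid (A ⊛ I)) · (cid (A ⊙ A) ⊛' ρo (A ⊛ I))))
    · (cid A ⊛' ζ A (A ⊛ I) A I)
    · (cid A ⊛' (αb A A I ⊙' cid (A ⊛ I)))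
    · (cid A ⊛' (((wΔ · wη) ⊛' cid I) ⊙' cid (A ⊛ I)))
    · (cid A ⊛' (δ ⊙' cid (A ⊛ I)))
    · (cid A ⊛' λo' (A ⊛ I)) · αb A A I
    · ((wΔ · wη) ⊛' cid I) · δ
    = αb A A (A ⊛ I) · (wΔ ⊛' cid (A ⊛ I)) · αb A A I
      · (wΔ ⊛' cid I) · (wη ⊛' cid I) · δ;
  ax_LRC :
    ϖ · (cid J ⊙' (wε · wμ)) · αo J A A
    · (λb (J ⊙ A) ⊙' cid A)
    · ((ϖ ⊛' cid (J ⊙ A)) ⊙' cid A)
    · (((cid J ⊙' (wε · wμ)) ⊛' cid (J ⊙ A)) ⊙' cid A)
    · ((αo J A A ⊛' cid (J ⊙ A)) ⊙' cid A)
    · (ζ (J ⊙ A) J A A ⊙' cid A)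
    · ((ρb' (J ⊙ A) ⊙' cid (A ⊛ A)) ⊙' cid A)
    · ((cid (J ⊙ A) ⊙' wΔ) ⊙' cid A)
    = ϖ · (cid J ⊙' wε) · (cid J ⊙' wμ) · αo J A A
      · (cid (J ⊙ A) ⊙' wμ) · αo (J ⊙ A) A A;
  ax_LLC :
    ϖ · (cid J ⊙' (wε · wμ)) · αo J A A
    · (ρb (J ⊙ A) ⊙' cid A)
    · ((cid (J ⊙ A) ⊛' ϖ) ⊙' cid A)
    · ((cid (J ⊙ A) ⊛' (cid J ⊙' (wε · wμ))) ⊙' cid A)
    · ((cid (J ⊙ A) ⊛' αo J A A) ⊙' cid A)
    · (ζ J (J ⊙ A) A A ⊙' cid A)
    · ((λb' (J ⊙ A) ⊙' cid (A ⊛ A)) ⊙' cid A)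
    · ((cid (J ⊙ A) ⊙' wΔ) ⊙' cid A)
    = ϖ · (cid J ⊙' wε) · (cid J ⊙' wμ) · αo J A A
      · (cid (J ⊙ A) ⊙' wμ) · αo (J ⊙ A) A A;
  ax_RRC :
    ϖ · ((wε · wμ) ⊙' cid J) · αo' A A J
    · (cid A ⊙' λb (A ⊙ J))
    · (cid A ⊙' (ϖ ⊛' cid (A ⊙ J)))
    · (cid A ⊙' (((wε · wμ) ⊙' cid J) ⊛' cid (A ⊙ J)))
    · (cid A ⊙' (αo' A A J ⊛' cid (A ⊙ J)))
    · (cid A ⊙' ζ A A (A ⊙ J) J)
    · (cid A ⊙' (cid (A ⊛ A) ⊙' ρb' (A ⊙ J)))
    · (cid A ⊙' (wΔ ⊙' cid (A ⊙ J)))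
    = ϖ · (wε ⊙' cid J) · (wμ ⊙' cid J) · αo' A A J
      · (wμ ⊙' cid (A ⊙ J)) · αo' A A (A ⊙ J);
  ax_RLC :
    ϖ · ((wε · wμ) ⊙' cid J) · αo' A A J
    · (cid A ⊙' ρb (A ⊙ J))
    · (cid A ⊙' (cid (A ⊙ J) ⊛' ϖ))
    · (cid A ⊙' (cid (A ⊙ J) ⊛' ((wε · wμ) ⊙' cid J)))
    · (cid A ⊙' (cid (A ⊙ J) ⊛' αo' A A J))
    · (cid A ⊙' ζ A A J (A ⊙ J))
    · (cid A ⊙' (cid (A ⊛ A) ⊙' λb' (A ⊙ J)))
    · (cid A ⊙' (wΔ ⊙' cid (A ⊙ J)))
    = ϖ · (wε ⊙' cid J) · (wμ ⊙' cid J) · αo' A A J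
      · (wμ ⊙' cid (A ⊙ J)) · αo' A A (A ⊙ J) }.

Definition psi (A : C) (W : WeakBimonoid A) (M : C)
  : hom ((M ⊛ A) ⊙ A) ((M ⊙ A) ⊛ A) :=
  (cid (M ⊙ A) ⊛' wμ W) · ζ M A A A · (cid (M ⊛ A) ⊙' wΔ W).

Definition weak_mixed_distributive_law (A : C) (mu : hom (A ⊙ A) A) (eta : hom I A)
    (Delta : hom A (A ⊛ A)) (eps : hom A J)
    (ps : forall M : C, hom ((M ⊛ A) ⊙ A) ((M ⊙ A) ⊛ A)) : Prop :=
  (forall (M N : C) (f : hom M N),
      ((f ⊙' cid A) ⊛' cid A) · ps M = ps N · ((f ⊛' cid A) ⊙' cid A)) /\
  (forall M : C,
      ((cid M ⊙' mu) ⊛' cid A) · (αo M A A ⊛' cid A) · ps (M ⊙ A) · (ps M ⊙' cid A)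
      = ps M · (cid (M ⊛ A) ⊙' mu) · αo (M ⊛ A) A A) /\
  (forall M : C,
      ps M · (cid (M ⊛ A) ⊙' eta) · ρo' (M ⊛ A)
      = (ρb (M ⊙ A) ⊛' cid A) · ((cid (M ⊙ A) ⊛' eps) ⊛' cid A) · (ps M ⊛' cid A)
        · ((cid (M ⊛ A) ⊙' eta) ⊛' cid A) · (ρo' (M ⊛ A) ⊛' cid A)
        · αb' M A A · (cid M ⊛' Delta)) /\
  (forall M : C,
      (ps M ⊛' cid A) · ps (M ⊛ A) · (αb' M A A ⊙' cid A) · ((cid M ⊛' Delta) ⊙' cid A)
      = αb' (M ⊙ A) A A · (cid (M ⊙ A) ⊛' Delta) · ps M) /\
  (forall M : C,
      ρb (M ⊙ A) · (cid (M ⊙ A) ⊛' eps) · ps M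
      = (cid M ⊙' mu) · αo M A A · (ρb (M ⊙ A) ⊙' cid A)
        · ((cid (M ⊙ A) ⊛' eps) ⊙' cid A) · (ps M ⊙' cid A)
        · ((cid (M ⊛ A) ⊙' eta) ⊙' cid A) · (ρo' (M ⊛ A) ⊙' cid A)).

End WeakBimonoid.

(* Naturality and (i) follow from naturality and associativity of [ζ], associativity of [μ]
   and (WB).  For (ii), [φ_M := ψ_M · ((M • A) ∘ η)] is a map of [(-) • A]-comodules: (RRU)
   says [Δ²(1) = 1_(1) • 1_(2) 1'_(1) • 1'_(2)], and with (WB) and the unit law of [μ] this
   identifies [((M ∘ A) • Δ) · φ_M] with [(φ_M • A) · (M • Δ)]; applying the counit gives (ii).
   Reversing arrows and exchanging [∘] with [•], [ζ_{a,b,c,d}] with [ζ_{a,c,b,d}], [(μ, η)]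
   with [(Δ, ε)] and (RRU) with (LLC) preserves every axiom used and fixes [ψ]; under this
   duality (i) becomes (iii) and (ii) becomes (iv). *)

From Stdlib Require Import ssreflect.

Ltac chain_simpl := rewrite ?comp_assoc ?comp_idl ?comp_idr.

(* Chains of morphisms are kept left-associated, so a composite [x1 · ... · xn]
   occurs in a goal only as the tail of a longer prefix [r · x1 · ... · xn];
   [rewrite_chain H] rewrites such occurrences with [H : x1 · ... · xn = R]. *)
Ltac chain_with_prefix r L :=
  lazymatch L with
  | @comp _ _ _ _ ?P ?x => let P' := chain_with_prefix r P in constr:(comp P' x)
  | _ => constr:(comp r L)
  end.

Ltac rewrite_chain H :=
  lazymatch type of H with
  | @eq (@hom ?CC ?a ?b) ?L ?R =>
    first [ rewrite H
          | let H' := fresh in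
            assert (H' : forall (c : ob CC) (r : hom b c),
                       ltac:(let t := chain_with_prefix r L in exact (t = comp r R)))
              by (intros; rewrite -H; rewrite !comp_assoc; reflexivity);
            rewrite H'; clear H' ]; rewrite ?comp_assoc
  end.

Section CategoryFacts.
Context {C : Cat}.

Lemma comp_chain_congr {a b c d : C} {x : hom b c} {y : hom a b} {z : hom a c}
    (r : hom c d) : x · y = z -> r · x · y = r · z.
Proof. by move=> <-; rewrite comp_assoc. Qed.

Lemma iso_cancel_r {a b c : C} (f g : hom b c) (h : hom a b) (h' : hom b a) :
  h · h' = cid b -> f · h = g · h -> f = g.
Proof. by move=> hK E; rewrite -[f]comp_idr -[g]comp_idr -hK !comp_assoc E. Qed.

Lemma iso_cancel_l {a b c : C} (f g : hom a b) (h : hom b c) (h' : hom c b) :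
  h' · h = cid b -> h · f = h · g -> f = g.
Proof. by move=> hK E; rewrite -[f]comp_idl -[g]comp_idl -hK -!comp_assoc E. Qed.

Lemma inverse_unique {a b : C} (f : hom a b) (f' g' : hom b a) :
  f' · f = cid a -> f · g' = cid b -> f' = g'.
Proof. by move=> H1 H2; rewrite -[f']comp_idr -H2 comp_assoc H1 comp_idl. Qed.

End CategoryFacts.

Section MonoidalFacts.
Context {C : Cat} (M : Monoidal C).
Local Notation T := (tensm M).
Local Notation "a ⊗ b" := (tens M a b) (at level 40, left associativity).
Local Notation U := (munit M).
Local Notation L := (mlaws M).

Lemma tensm_compl {a b c x : C} (f : hom b c) (g : hom a b) :
  T (f · g) (cid x) = T f (cid x) · T g (cid x).
Proof. by rewrite -(tensm_comp L) comp_idl. Qed.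

Lemma tensm_compr {a b c x : C} (f : hom b c) (g : hom a b) :
  T (cid x) (f · g) = T (cid x) f · T (cid x) g.
Proof. by rewrite -(tensm_comp L) comp_idl. Qed.

Lemma tensm_split_l {a b c d : C} (f : hom a b) (g : hom c d) :
  T f g = T f (cid d) · T (cid a) g.
Proof. by rewrite -(tensm_comp L) comp_idl comp_idr. Qed.

Lemma tensm_split_r {a b c d : C} (f : hom a b) (g : hom c d) :
  T f g = T (cid b) g · T f (cid c).
Proof. by rewrite -(tensm_comp L) comp_idl comp_idr. Qed.

Lemma tensm_interchange {a b c d : C} (f : hom a b) (g : hom c d) :
  T f (cid d) · T (cid a) g = T (cid b) g · T f (cid c).
Proof. by rewrite -tensm_split_l -tensm_split_r. Qed.

Lemma asci_nat {a a' b b' c c' : C} (f : hom a a') (g : hom b b') (h : hom c c') :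
  asci M a' b' c' · T f (T g h) = T (T f g) h · asci M a b c.
Proof.
  rewrite -[LHS]comp_idr -(asc_iso2 L a b c) !comp_assoc.
  by rewrite -[asci _ _ _ _ · _ · _]comp_assoc -(asc_nat L) comp_assoc (asc_iso1 L) comp_idl.
Qed.

Lemma asci_nat_l {a a' : C} (b c : C) (f : hom a a') :
  asci M a' b c · T f (cid (b ⊗ c)) = T (T f (cid b)) (cid c) · asci M a b c.
Proof. by rewrite -asci_nat (tensm_id L). Qed.

Lemma asci_nat_r {c c' : C} (a b : C) (h : hom c c') :
  asci M a b c' · T (cid a) (T (cid b) h) = T (cid (a ⊗ b)) h · asci M a b c.
Proof. by rewrite asci_nat (tensm_id L). Qed.

Lemma lui_nat {a b : C} (f : hom a b) : lui M b · f = T (cid U) f · lui M a.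
Proof.
  rewrite -[LHS]comp_idr -(lu_iso2 L a) !comp_assoc.
  by rewrite -[lui _ _ · f · _]comp_assoc (lu_nat L) comp_assoc (lu_iso1 L) comp_idl.
Qed.

Lemma rui_nat {a b : C} (f : hom a b) : rui M b · f = T f (cid U) · rui M a.
Proof.
  rewrite -[LHS]comp_idr -(ru_iso2 L a) !comp_assoc.
  by rewrite -[rui _ _ · f · _]comp_assoc (ru_nat L) comp_assoc (ru_iso1 L) comp_idl.
Qed.

Lemma pentagon_asci (a b c d : C) :
  asci M (a ⊗ b) c d · asci M a b (c ⊗ d)
  = T (asci M a b c) (cid d) · asci M a (b ⊗ c) d · T (cid a) (asci M b c d).
Proof.
  apply: (inverse_unique (asc M a b (c ⊗ d) · asc M (a ⊗ b) c d)).
  - rewrite -!comp_assoc [asci _ _ _ (_ ⊗ _) · (_ · _)]comp_assoc.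
    by rewrite (asc_iso1 L) comp_idl (asc_iso1 L).
  - rewrite (pentagon L) -!comp_assoc [T (asc _ _ _ _) _ · (_ · _)]comp_assoc -(tensm_comp L).
    rewrite (asc_iso2 L) comp_idl (tensm_id L) comp_idl [asc _ _ _ _ · (_ · _)]comp_assoc.
    by rewrite (asc_iso2 L) comp_idl -(tensm_comp L) (asc_iso2 L) comp_idl (tensm_id L).
Qed.

Lemma triangle_asci (a b : C) : asci M a U b · T (cid a) (lui M b) = T (rui M a) (cid b).
Proof.
  apply: (inverse_unique (T (cid a) (lu M b) · asc M a U b)).
  - rewrite -!comp_assoc [T _ _ · (_ · _)]comp_assoc -(tensm_comp L) (lu_iso1 L).
    by rewrite comp_idl (tensm_id L) comp_idl (asc_iso1 L).
  - by rewrite (triangle L) -(tensm_comp L) (ru_iso2 L) comp_idl (tensm_id L).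
Qed.

(* Tensoring with the unit is faithful, since it is conjugate to the identity functor. *)
Lemma lu_faithful {a b : C} (f g : hom a b) : T (cid U) f = T (cid U) g -> f = g.
Proof.
  have conj h : h = lu M b · T (cid U) h · lui M a.
    by rewrite -(lu_nat L) -comp_assoc (lu_iso2 L) comp_idr.
  by move=> E; rewrite [f]conj [g]conj E.
Qed.

Lemma ru_faithful {a b : C} (f g : hom a b) : T f (cid U) = T g (cid U) -> f = g.
Proof.
  have conj h : h = ru M b · T h (cid U) · rui M a.
    by rewrite -(ru_nat L) -comp_assoc (ru_iso2 L) comp_idr.
  by move=> E; rewrite [f]conj [g]conj E.
Qed.

(* Kelly's lemmas, consequences of the pentagon and triangle axioms. *)
Lemma lu_tens (a b : C) : lu M (a ⊗ b) · asc M U a b = T (lu M a) (cid b).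
Proof.
  apply: lu_faithful.
  apply: (iso_cancel_r _ _ (asc M U (U ⊗ a) b · T (asc M U U a) (cid b))
                         (T (asci M U U a) (cid b) · asci M U (U ⊗ a) b)).
  { rewrite -!comp_assoc (comp_assoc (T _ _) (T _ _)) -(tensm_comp L) (asc_iso2 L).
    by rewrite comp_idl (tensm_id L) comp_idl (asc_iso2 L). }
  have P := eq_sym (pentagon L U U a b).
  have T1 := triangle L U (a ⊗ b).
  have N1 := asc_nat L (ru M U) (cid a) (cid b); rewrite (tensm_id L) in N1.
  have N2 := asc_nat L (cid U) (lu M a) (cid b).
  rewrite tensm_compr ?comp_assoc.
  rewrite_chain P; rewrite_chain T1; rewrite_chain (eq_sym N1).
  by rewrite -(triangle L U a) tensm_compl ?comp_assoc; rewrite_chain N2.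
Qed.

Lemma ru_tens (a b : C) : T (cid a) (ru M b) · asc M a b U = ru M (a ⊗ b).
Proof.
  apply: ru_faithful.
  apply: (iso_cancel_l _ _ (asc M a b U) (asci M a b U) (asc_iso1 L a b U)).
  have P := eq_sym (pentagon L a b U U).
  have N1 := asc_nat L (cid a) (cid b) (lu M U); rewrite (tensm_id L) in N1.
  rewrite -(triangle L (a ⊗ b) U) tensm_compl ?comp_assoc (asc_nat L).
  rewrite -(triangle L b U) tensm_compr ?comp_assoc.
  by rewrite_chain P; rewrite_chain (eq_sym N1).
Qed.

Lemma lu_tens_asci (a b : C) : T (lu M a) (cid b) · asci M U a b = lu M (a ⊗ b).
Proof. by rewrite -lu_tens -comp_assoc (asc_iso2 L) comp_idr. Qed.

Lemma asci_rui (a b : C) : asci M a b U · T (cid a) (rui M b) = rui M (a ⊗ b).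
Proof.
  rewrite -[LHS]comp_idl -(ru_iso1 L) -ru_tens !comp_assoc.
  rewrite -[rui _ _ · _ · asc _ _ _ _ · asci _ _ _ _]comp_assoc (asc_iso2 L) comp_idr.
  by rewrite -comp_assoc -(tensm_comp L) (ru_iso2 L) comp_idl (tensm_id L) comp_idr.
Qed.

End MonoidalFacts.

Definition Cop (C : Cat) : Cat :=
  {| ob := ob C;
     hom := fun a b => @hom C b a;
     cid := fun a => @cid C a;
     comp := fun a b c g f => @comp C c b a f g;
     comp_idl := fun a b f => @comp_idr C b a f;
     comp_idr := fun a b f => @comp_idl C b a f;
     comp_assoc := fun a b c d h g f => eq_sym (@comp_assoc C d c b a f g h) |}.

Section OppositeMonoidal.
Context {C : Cat} (M : Monoidal C).
Local Notation L := (mlaws M).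

Definition op_monoidal_ops : MonOps (Cop C) :=
  {| tens := tens M : Cop C -> Cop C -> Cop C;
     tensm := fun a b c d (f : @hom C b a) (g : @hom C d c) => tensm M f g;
     munit := munit M;
     asc := asci M;
     asci := asc M;
     lu := lui M;
     lui := lu M;
     ru := rui M;
     rui := ru M |}.

Lemma op_monoidal_laws : MonLaws op_monoidal_ops.
Proof.
  split=> /=.
  - exact: (tensm_id L).
  - move=> *; exact: (tensm_comp L).
  - exact: (asc_iso1 L).
  - exact: (asc_iso2 L).
  - move=> * /=; symmetry; apply: asci_nat.
  - exact: (lu_iso1 L).
  - exact: (lu_iso2 L).
  - move=> * /=; apply: lui_nat.
  - exact: (ru_iso1 L).
  - exact: (ru_iso2 L).
  - move=> * /=; apply: rui_nat.
  - by move=> a b c d; rewrite pentagon_asci !comp_assoc.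
  - exact: triangle_asci.
Qed.

Definition op_monoidal : Monoidal (Cop C) :=
  {| mops := op_monoidal_ops; mlaws := op_monoidal_laws |}.

End OppositeMonoidal.

Section MixedDistributiveLaw.
Context {C : Cat} {O B : Monoidal C}.
Local Notation "a ⊙ b" := (tens O a b) (at level 40, left associativity).
Local Notation "a ⊛ b" := (tens B a b) (at level 40, left associativity).
Local Notation "f ⊙' g" := (tensm O f g) (at level 40, left associativity).
Local Notation "f ⊛' g" := (tensm B f g) (at level 40, left associativity).
Local Notation "1" := (cid _).
Local Notation I := (munit O).
Local Notation J := (munit B).
Local Notation LO := (mlaws O).
Local Notation LB := (mlaws B).
Local Notation αo := (asc O).
Local Notation αo' := (asci O).
Local Notation αb' := (asci B).
Local Notation λo := (lu O).
Local Notation ρo := (ru O).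
Local Notation ρo' := (rui O).
Local Notation λb := (lu B).
Local Notation λb' := (lui B).
Local Notation ρb := (ru B).

Context {δ : hom I (I ⊛ I)} {τ : hom I J}
  {ζ : forall a b c d : C, hom ((a ⊛ b) ⊙ (c ⊛ d)) ((a ⊙ c) ⊛ (b ⊙ d))}.
Hypothesis Hzeta_nat : forall (a a' b b' c c' d d' : C) (f : hom a a') (g : hom b b')
    (h : hom c c') (k : hom d d'),
  ζ a' b' c' d' · ((f ⊛' g) ⊙' (h ⊛' k)) = ((f ⊙' h) ⊛' (g ⊙' k)) · ζ a b c d.
Hypothesis Hdelta_lcounit : (τ ⊛' 1) · δ = λb' I.
Hypothesis Hzeta_assoc_o : forall a b c d e f : C,
  (αo a c e ⊛' αo b d f) · ζ (a ⊙ c) (b ⊙ d) e f · (ζ a b c d ⊙' cid (e ⊛ f))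
  = ζ a b (c ⊙ e) (d ⊙ f) · (cid (a ⊛ b) ⊙' ζ c d e f) · αo (a ⊛ b) (c ⊛ d) (e ⊛ f).
Hypothesis Hzeta_assoc_b : forall a b c d e f : C,
  asc B (a ⊙ d) (b ⊙ e) (c ⊙ f) · (ζ a b d e ⊛' cid (c ⊙ f)) · ζ (a ⊛ b) c (d ⊛ e) f
  = (cid (a ⊙ d) ⊛' ζ b c e f) · ζ a (b ⊛ c) d (e ⊛ f) · (asc B a b c ⊙' asc B d e f).
Hypothesis Hzeta_delta_r : forall a b : C,
  (ρo a ⊛' ρo b) · ζ a b I I · (cid (a ⊛ b) ⊙' δ) = ρo (a ⊛ b).

Context {A : C} {μ : hom (A ⊙ A) A} {η : hom I A} {Δ : hom A (A ⊛ A)} {ε : hom A J}.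
Hypothesis Hmu_assoc : μ · (μ ⊙' 1) = μ · (1 ⊙' μ) · αo A A A.
Hypothesis Hmu_runit : μ · (1 ⊙' η) = ρo A.
Hypothesis HDelta_coassoc : (Δ ⊛' 1) · Δ = αb' A A A · (1 ⊛' Δ) · Δ.
Hypothesis HDelta_lcounit : (ε ⊛' 1) · Δ = λb' A.
Hypothesis HWB : Δ · μ = (μ ⊛' μ) · ζ A A A A · (Δ ⊙' Δ).
Hypothesis HRRU :
    (((cid (I ⊛ A) ⊛' μ) · (λo (I ⊛ A) ⊛' cid (A ⊙ A))) ⊛' 1)
    · (ζ I A (I ⊛ A) A ⊛' 1)
    · ((cid (I ⊛ A) ⊙' αb' I A A) ⊛' 1)
    · ((cid (I ⊛ A) ⊙' (cid I ⊛' (Δ · η))) ⊛' 1)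
    · ((cid (I ⊛ A) ⊙' δ) ⊛' 1)
    · (ρo' (I ⊛ A) ⊛' 1) · αb' I A A
    · (cid I ⊛' (Δ · η)) · δ
    = αb' (I ⊛ A) A A · αb' I A (A ⊛ A)
      · (cid I ⊛' (cid A ⊛' Δ)) · (cid I ⊛' Δ) · (cid I ⊛' η) · δ.

Definition mixed_psi (M : C) : hom ((M ⊛ A) ⊙ A) ((M ⊙ A) ⊛ A) :=
  (cid (M ⊙ A) ⊛' μ) · ζ M A A A · (cid (M ⊛ A) ⊙' Δ).

Local Ltac rewrite_zeta_nat f g h k :=
  let E := fresh in
  have E := Hzeta_nat _ _ _ _ _ _ _ _ f g h k;
  rewrite ?(tensm_id LO) ?(tensm_id LB) in E; rewrite_chain E; clear E.

Local Ltac rewrite_zeta_nat_rev f g h k :=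
  let E := fresh in
  have E := eq_sym (Hzeta_nat _ _ _ _ _ _ _ _ f g h k);
  rewrite ?(tensm_id LO) ?(tensm_id LB) in E; rewrite_chain E; clear E.

Lemma mixed_psi_natural (M N : C) (f : hom M N) :
  ((f ⊙' 1) ⊛' 1) · mixed_psi M = mixed_psi N · ((f ⊛' 1) ⊙' 1).
Proof.
  rewrite /mixed_psi; chain_simpl.
  rewrite_chain (tensm_interchange B (f ⊙' cid A) μ).
  rewrite_zeta_nat_rev f (cid A) (cid A) (cid A).
  by rewrite_chain (tensm_interchange O (f ⊛' cid A) Δ).
Qed.

Lemma zeta_assoc_o_inner (a b c d e f : C) :
  ζ a b (c ⊙ e) (d ⊙ f) · (cid (a ⊛ b) ⊙' ζ c d e f)
  = (αo a c e ⊛' αo b d f) · ζ (a ⊙ c) (b ⊙ d) e f · (ζ a b c d ⊙' cid (e ⊛ f))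
    · αo' (a ⊛ b) (c ⊛ d) (e ⊛ f).
Proof. by rewrite Hzeta_assoc_o -!comp_assoc (asc_iso2 LO) comp_idr. Qed.

Lemma zeta_assoc_o_outer (a b c d e f : C) :
  ζ (a ⊙ c) (b ⊙ d) e f · (ζ a b c d ⊙' cid (e ⊛ f)) · αo' (a ⊛ b) (c ⊛ d) (e ⊛ f)
  = (αo' a c e ⊛' αo' b d f) · ζ a b (c ⊙ e) (d ⊙ f) · (cid (a ⊛ b) ⊙' ζ c d e f).
Proof.
  rewrite -[LHS]comp_idl -(tensm_id LB) -!(asc_iso1 LO) (tensm_comp LB) -!comp_assoc.
  rewrite [(αo _ _ _ ⊛' _) · _]comp_assoc [(αo _ _ _ ⊛' _) · _ · _]comp_assoc Hzeta_assoc_o.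
  by rewrite -!comp_assoc (asc_iso2 LO) comp_idr.
Qed.

Lemma zeta_assoc_b_outer (a b c d e f : C) :
  (ζ a b d e ⊛' cid (c ⊙ f)) · ζ (a ⊛ b) c (d ⊛ e) f · (αb' a b c ⊙' αb' d e f)
  = αb' (a ⊙ d) (b ⊙ e) (c ⊙ f) · (cid (a ⊙ d) ⊛' ζ b c e f) · ζ a (b ⊛ c) d (e ⊛ f).
Proof.
  rewrite -[LHS]comp_idl -(asc_iso1 LB) -!comp_assoc.
  rewrite [asc B _ _ _ · _]comp_assoc [asc B _ _ _ · _ · _]comp_assoc Hzeta_assoc_b.
  by rewrite -!comp_assoc -(tensm_comp LO) !(asc_iso2 LB) (tensm_id LO) comp_idr.
Qed.

Lemma zeta_assoc_b_inner (a b c d e f : C) :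
  (cid (a ⊙ d) ⊛' ζ b c e f) · ζ a (b ⊛ c) d (e ⊛ f)
  = asc B (a ⊙ d) (b ⊙ e) (c ⊙ f) · (ζ a b d e ⊛' cid (c ⊙ f)) · ζ (a ⊛ b) c (d ⊛ e) f
    · (αb' a b c ⊙' αb' d e f).
Proof.
  rewrite Hzeta_assoc_b -!comp_assoc -(tensm_comp LO) !(asc_iso2 LB).
  by rewrite (tensm_id LO) comp_idr.
Qed.

Lemma mixed_psi_mult (M : C) :
  ((cid M ⊙' μ) ⊛' 1) · (αo M A A ⊛' 1) · mixed_psi (M ⊙ A) · (mixed_psi M ⊙' 1)
  = mixed_psi M · (cid (M ⊛ A) ⊙' μ) · αo (M ⊛ A) A A.
Proof.
  rewrite /mixed_psi !(tensm_compl O); chain_simpl.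
  rewrite_chain (eq_sym (tensm_interchange O (cid (M ⊙ A) ⊛' μ) Δ)).
  rewrite_zeta_nat (cid (M ⊙ A)) μ (cid A) (cid A).
  rewrite_chain (eq_sym (tensm_interchange O (ζ M A A A) Δ)).
  rewrite_chain (eq_sym (tensm_interchange O (cid (M ⊛ A) ⊙' Δ) Δ)).
  rewrite_chain (eq_sym (tensm_compr O (x := M ⊛ A) Δ μ)).
  rewrite HWB !(tensm_compr O); chain_simpl.
  rewrite_zeta_nat (cid M) (cid A) μ μ.
  rewrite_chain (zeta_assoc_o_inner M A A A A A).
  rewrite_chain (asci_nat O (cid (M ⊛ A)) Δ Δ).
  rewrite_chain (asc_iso1 LO (M ⊛ A) A A); rewrite comp_idr.
  rewrite [(cid (M ⊛ A) ⊙' Δ) ⊙' Δ](tensm_split_l O); chain_simpl.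
  have assoc_mult : (cid (M ⊙ A) ⊛' μ) · ((cid M ⊙' μ) ⊛' (cid A ⊙' μ)) · (αo M A A ⊛' αo A A A)
     = ((cid M ⊙' μ) ⊛' 1) · (αo M A A ⊛' 1) · (1 ⊛' μ) · (1 ⊛' (μ ⊙' cid A)).
    by rewrite -!(tensm_comp LB) !comp_idl !comp_idr Hmu_assoc.
  by rewrite_chain assoc_mult.
Qed.

Lemma tau_lunit_asci (X Y : C) :
  ((λb X · (τ ⊛' cid X)) ⊛' cid Y) · αb' I X Y = λb (X ⊛ Y) · (τ ⊛' cid (X ⊛ Y)).
Proof.
  by rewrite (tensm_compl B) -comp_assoc -asci_nat (tensm_id LB) comp_assoc lu_tens_asci.
Qed.

(* In Sweedler notation [kappa (i • a) = 1_(1) • a 1_(2)]. *)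
Definition kappa : hom (I ⊛ A) (A ⊛ A) :=
  (λo A ⊛' μ) · ζ I A A A · (cid (I ⊛ A) ⊙' (Δ · η)) · ρo' (I ⊛ A).

Lemma kappa_of_RRU :
  ((λb A · (τ ⊛' cid A)) ⊛' cid A) · ((cid (I ⊛ A) ⊛' μ) · (λo (I ⊛ A) ⊛' cid (A ⊙ A)))
    · ζ I A (I ⊛ A) A · (cid (I ⊛ A) ⊙' αb' I A A) · (cid (I ⊛ A) ⊙' (cid I ⊛' (Δ · η)))
    · (cid (I ⊛ A) ⊙' δ) · ρo' (I ⊛ A)
  = kappa.
Proof.
  rewrite /kappa; chain_simpl.
  rewrite_chain (tensm_interchange B (λb A · (τ ⊛' cid A)) μ).
  have lu_slide : ((λb A · (τ ⊛' cid A)) ⊛' cid (A ⊙ A)) · (λo (I ⊛ A) ⊛' cid (A ⊙ A))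
    = (λo A ⊛' cid (A ⊙ A)) · ((cid I ⊙' (λb A · (τ ⊛' cid A))) ⊛' cid (A ⊙ A)).
    by rewrite -!(tensm_compl B) -(lu_nat LO).
  rewrite_chain lu_slide.
  rewrite_zeta_nat_rev (cid I) (cid A) (λb A · (τ ⊛' cid A)) (cid A).
  have counit_leg : ((λb A · (τ ⊛' cid A)) ⊛' cid A) · αb' I A A · (cid I ⊛' (Δ · η)) · δ
    = Δ · η.
  { rewrite tau_lunit_asci -!comp_assoc [(τ ⊛' _) · (_ · _)]comp_assoc.
    rewrite (tensm_interchange B τ (Δ · η)) -!comp_assoc Hdelta_lcounit comp_assoc.
    by rewrite -(lu_nat LB) -comp_assoc (lu_iso2 LB) comp_idr. }
  have counit_leg_right :
    (cid (I ⊛ A) ⊙' ((λb A · (τ ⊛' cid A)) ⊛' cid A)) · (cid (I ⊛ A) ⊙' αb' I A A)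
    · (cid (I ⊛ A) ⊙' (cid I ⊛' (Δ · η))) · (cid (I ⊛ A) ⊙' δ) = cid (I ⊛ A) ⊙' (Δ · η).
    by rewrite -!(tensm_compr O) counit_leg.
  rewrite_chain counit_leg_right.
  by rewrite [λo A ⊛' μ](tensm_split_r B); chain_simpl.
Qed.

(* (RRU), with its first tensor factor counited, in Sweedler notation:
   [Δ²(1) = 1_(1) • 1_(2) 1'_(1) • 1'_(2)]. *)
Lemma comult2_unit :
  (Δ ⊛' 1) · Δ · η = (kappa ⊛' 1) · αb' I A A · (cid I ⊛' (Δ · η)) · δ.
Proof.
  transitivity ((((λb A · (τ ⊛' cid A)) ⊛' cid A) ⊛' cid A) ·
    (αb' (I ⊛ A) A A · αb' I A (A ⊛ A) · (cid I ⊛' (cid A ⊛' Δ)) · (cid I ⊛' Δ)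
     · (cid I ⊛' η) · δ)).
  { chain_simpl.
    rewrite_chain (eq_sym (asci_nat_l B A A (λb A · (τ ⊛' cid A)))).
    rewrite_chain (tau_lunit_asci A (A ⊛ A)).
    rewrite_chain (tensm_interchange B τ (cid A ⊛' Δ)).
    rewrite_chain (tensm_interchange B τ Δ).
    rewrite_chain (tensm_interchange B τ η).
    rewrite_chain Hdelta_lcounit.
    rewrite_chain (eq_sym (lu_nat LB (cid A ⊛' Δ))).
    rewrite_chain (eq_sym (lu_nat LB Δ)).
    rewrite_chain (eq_sym (lu_nat LB η)).
    rewrite -[_ · lu _ _ · lui _ _]comp_assoc (lu_iso2 LB) comp_idr HDelta_coassoc.
    by chain_simpl. }
  by rewrite -HRRU; chain_simpl; rewrite -!(tensm_compl B) -kappa_of_RRU.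
Qed.

Definition psi_eta (M : C) : hom (M ⊛ A) ((M ⊙ A) ⊛ A) :=
  mixed_psi M · (cid (M ⊛ A) ⊙' η) · ρo' (M ⊛ A).

(* [(m • a • a') ∘ (b • b' • b'') ↦ m ∘ b • a b' • a' b''] *)
Definition double_psi (M : C) :
    hom (((M ⊛ A) ⊛ A) ⊙ ((A ⊛ A) ⊛ A)) (((M ⊙ A) ⊛ A) ⊛ A) :=
  ((cid (M ⊙ A) ⊛' μ) ⊛' μ) · (ζ M A A A ⊛' cid (A ⊙ A)) · ζ (M ⊛ A) A (A ⊛ A) A.

Lemma comult_mixed_psi (M : C) :
  αb' (M ⊙ A) A A · (cid (M ⊙ A) ⊛' Δ) · mixed_psi M
  = double_psi M · ((αb' M A A · (cid M ⊛' Δ)) ⊙' ((Δ ⊛' cid A) · Δ)).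
Proof.
  rewrite /mixed_psi /double_psi; chain_simpl.
  rewrite_chain (eq_sym (tensm_compr B (x := M ⊙ A) Δ μ)).
  rewrite HWB !(tensm_compr B); chain_simpl.
  rewrite_zeta_nat_rev (cid M) Δ (cid A) Δ.
  rewrite_chain (zeta_assoc_b_inner M A A A A A).
  rewrite_chain (asci_nat B (cid (M ⊙ A)) μ μ).
  rewrite_chain (asc_iso1 LB (M ⊙ A) (A ⊙ A) (A ⊙ A)); rewrite comp_idr.
  have coassoc : (αb' M A A · (cid M ⊛' Δ)) ⊙' ((Δ ⊛' cid A) · Δ)
    = (αb' M A A ⊙' αb' A A A) · ((cid M ⊛' Δ) ⊙' (cid A ⊛' Δ)) · (cid (M ⊛ A) ⊙' Δ).
    by rewrite -!(tensm_comp LO) !comp_idr HDelta_coassoc; chain_simpl.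
  by rewrite coassoc; chain_simpl.
Qed.

Lemma zeta_kappa (M : C) :
  ζ M A A A · (cid (M ⊛ A) ⊙' kappa)
  = ((cid M ⊙' λo A) ⊛' (cid A ⊙' μ)) · (αo M I A ⊛' αo A A A) · ζ (M ⊙ I) (A ⊙ A) A A
    · (cid _ ⊙' (Δ · η)) · ρo' _ · ζ M A I A.
Proof.
  rewrite /kappa !(tensm_compr O); chain_simpl.
  rewrite_zeta_nat (cid M) (cid A) (λo A) μ.
  rewrite_chain (zeta_assoc_o_inner M A I A A A).
  rewrite_chain (asci_nat_r O (M ⊛ A) (I ⊛ A) Δ).
  rewrite_chain (asci_nat_r O (M ⊛ A) (I ⊛ A) η).
  rewrite_chain (asci_rui O (M ⊛ A) (I ⊛ A)).
  rewrite_chain (tensm_interchange O (ζ M A I A) Δ).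
  rewrite_chain (tensm_interchange O (ζ M A I A) η).
  by rewrite_chain (eq_sym (rui_nat O (ζ M A I A))).
Qed.

Lemma mult_zeta_kappa (M : C) :
  (cid (M ⊙ A) ⊛' μ) · ((cid M ⊙' λo A) ⊛' (cid A ⊙' μ)) · (αo M I A ⊛' αo A A A)
    · ζ (M ⊙ I) (A ⊙ A) A A · (cid _ ⊙' (Δ · η)) · ρo' _
  = ((cid M ⊙' λo A) ⊛' μ) · (αo M I A ⊛' cid (A ⊙ A)) · ζ (M ⊙ I) A A A
    · (cid _ ⊙' (Δ · η)) · ρo' _ · (cid (M ⊙ I) ⊛' μ).
Proof.
  have assoc_mult :
    (cid (M ⊙ A) ⊛' μ) · ((cid M ⊙' λo A) ⊛' (cid A ⊙' μ)) · (αo M I A ⊛' αo A A A)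
    = ((cid M ⊙' λo A) ⊛' μ) · (αo M I A ⊛' cid (A ⊙ A)) · (1 ⊛' (μ ⊙' cid A)).
    by rewrite -!(tensm_comp LB) !comp_idl !comp_idr Hmu_assoc; chain_simpl.
  rewrite_chain assoc_mult.
  rewrite_zeta_nat_rev (cid (M ⊙ I)) μ (cid A) (cid A).
  rewrite_chain (tensm_interchange O (cid (M ⊙ I) ⊛' μ) (Δ · η)).
  by rewrite_chain (eq_sym (rui_nat O (cid (M ⊙ I) ⊛' μ))).
Qed.

Lemma zeta_kappa_runit (M : C) :
  ((cid M ⊙' λo A) ⊛' μ) · (αo M I A ⊛' cid (A ⊙ A)) · ζ (M ⊙ I) A A A
    · (cid _ ⊙' (Δ · η)) · ρo' _ · (ρo' M ⊛' cid A)
  = psi_eta M.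
Proof.
  rewrite /psi_eta /mixed_psi.
  rewrite_chain (rui_nat O (ρo' M ⊛' cid A)).
  rewrite_chain (eq_sym (tensm_interchange O (ρo' M ⊛' cid A) (Δ · η))).
  rewrite_zeta_nat (ρo' M) (cid A) (cid A) (cid A).
  have runit_triangle :
    ((cid M ⊙' λo A) ⊛' μ) · (αo M I A ⊛' cid (A ⊙ A)) · ((ρo' M ⊙' cid A) ⊛' cid (A ⊙ A))
    = cid (M ⊙ A) ⊛' μ.
    rewrite -!(tensm_comp LB) !comp_idr (triangle LO) -(tensm_comp LO) (ru_iso2 LO).
    by rewrite comp_idl (tensm_id LO).
  by rewrite_chain runit_triangle; rewrite (tensm_compr O); chain_simpl.
Qed.

Lemma comult_mixed_psi_unit (M : C) :
  double_psi M · ((αb' M A A · (cid M ⊛' Δ)) ⊙' ((Δ ⊛' cid A) · Δ · η)) · ρo' (M ⊛ A)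
  = (psi_eta M ⊛' cid A) · αb' M A A · (cid M ⊛' Δ).
Proof.
  rewrite /double_psi comult2_unit.
  have split_legs : (αb' M A A · (cid M ⊛' Δ)) ⊙'
     ((kappa ⊛' cid A) · αb' I A A · (cid I ⊛' (Δ · η)) · δ)
   = (cid _ ⊙' (kappa ⊛' cid A))
     · (αb' M A A ⊙' αb' I A A) · ((cid M ⊛' Δ) ⊙' (cid I ⊛' (Δ · η))) · (cid (M ⊛ A) ⊙' δ).
    by rewrite -!(tensm_comp LO) !comp_idl !comp_idr.
  rewrite split_legs; chain_simpl.
  rewrite_zeta_nat (cid (M ⊛ A)) (cid A) kappa (cid A).
  rewrite (comp_chain_congr _ (eq_sym (tensm_compl B _ _))); chain_simpl.
  rewrite zeta_kappa [(cid (M ⊙ A) ⊛' μ) ⊛' μ](tensm_split_l B).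
  rewrite (comp_chain_congr _ (eq_sym (tensm_interchange B _ μ))); chain_simpl.
  rewrite -(tensm_compl B); chain_simpl; rewrite mult_zeta_kappa.
  rewrite [(_ · ζ M A I A) ⊛' _](tensm_compl B).
  rewrite [(_ · (cid (M ⊙ I) ⊛' μ)) ⊛' _](tensm_compl B).
  rewrite (comp_chain_congr _ (tensm_interchange B (ζ M A I A) μ)); chain_simpl.
  rewrite_chain (zeta_assoc_b_outer M A A I A A).
  rewrite_zeta_nat (cid M) Δ (cid I) (Δ · η).
  have zeta_delta : ζ M A I I · (cid (M ⊛ A) ⊙' δ) = (ρo' M ⊛' ρo' A) · ρo (M ⊛ A).
    by rewrite -Hzeta_delta_r !comp_assoc -(tensm_comp LB) !(ru_iso1 LO) (tensm_id LB) comp_idl.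
  rewrite_chain zeta_delta; rewrite_chain (ru_iso2 LO (M ⊛ A)); rewrite comp_idr.
  rewrite (comp_chain_congr _ (eq_sym (tensm_split_l B (cid (M ⊙ I) ⊛' μ) μ))); chain_simpl.
  rewrite_chain (eq_sym (asci_nat B (cid (M ⊙ I)) μ μ)).
  have comult_unit :
    (cid (M ⊙ I) ⊛' (μ ⊛' μ)) · (cid (M ⊙ I) ⊛' ζ A A A A) · (cid (M ⊙ I) ⊛' (Δ ⊙' (Δ · η)))
     · (ρo' M ⊛' ρo' A) = ρo' M ⊛' Δ.
  { rewrite -!(tensm_compr B) -(tensm_comp LB) comp_idl; congr (_ ⊛' _).
    have -> : Δ ⊙' (Δ · η) = (Δ ⊙' Δ) · (cid A ⊙' η) by rewrite -(tensm_comp LO) comp_idr.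
    rewrite !comp_assoc -HWB.
    by rewrite -[Δ · μ · _]comp_assoc Hmu_runit -comp_assoc (ru_iso2 LO) comp_idr. }
  rewrite_chain comult_unit.
  rewrite [ρo' M ⊛' Δ](tensm_split_l B); chain_simpl.
  rewrite_chain (asci_nat_l B A A (ρo' M)).
  by rewrite -(tensm_compl B) zeta_kappa_runit.
Qed.

Lemma tens_counit_comult (X : C) :
  (ρb X ⊛' cid A) · ((cid X ⊛' ε) ⊛' cid A) · αb' X A A · (cid X ⊛' Δ) = cid (X ⊛ A).
Proof.
  rewrite_chain (eq_sym (asci_nat B (cid X) ε (cid A))).
  have triangle_inv : (ρb X ⊛' cid A) · αb' X J A = cid X ⊛' λb A.
    by rewrite -(triangle LB) -comp_assoc (asc_iso2 LB) comp_idr.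
  rewrite_chain triangle_inv.
  by rewrite -!(tensm_compr B) -comp_assoc HDelta_lcounit (lu_iso2 LB) (tensm_id LB).
Qed.

Lemma psi_eta_comult (M : C) :
  αb' (M ⊙ A) A A · (cid (M ⊙ A) ⊛' Δ) · psi_eta M
  = (psi_eta M ⊛' cid A) · αb' M A A · (cid M ⊛' Δ).
Proof.
  transitivity (αb' (M ⊙ A) A A · (cid (M ⊙ A) ⊛' Δ) · mixed_psi M
                · (cid (M ⊛ A) ⊙' η) · ρo' (M ⊛ A)).
    by rewrite /psi_eta !comp_assoc.
  rewrite comult_mixed_psi -comult_mixed_psi_unit.
  by rewrite (comp_chain_congr _ (eq_sym (tensm_comp LO _ _ _ _))) comp_idr.
Qed.

Lemma mixed_psi_unit (M : C) :
  mixed_psi M · (cid (M ⊛ A) ⊙' η) · ρo' (M ⊛ A)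
  = (ρb (M ⊙ A) ⊛' 1) · ((cid (M ⊙ A) ⊛' ε) ⊛' 1) · (mixed_psi M ⊛' 1)
    · ((cid (M ⊛ A) ⊙' η) ⊛' 1) · (ρo' (M ⊛ A) ⊛' 1)
    · αb' M A A · (cid M ⊛' Δ).
Proof.
  transitivity ((ρb (M ⊙ A) ⊛' 1) · ((cid (M ⊙ A) ⊛' ε) ⊛' 1)
                · (αb' (M ⊙ A) A A · (cid (M ⊙ A) ⊛' Δ) · psi_eta M)).
    by rewrite !comp_assoc tens_counit_comult comp_idl.
  by rewrite psi_eta_comult /psi_eta !(tensm_compl B); chain_simpl.
Qed.

End MixedDistributiveLaw.

Section Duality.
Context {C : Cat} (D : Duoidal C) {A : C} (W : WeakBimonoid D A).
Local Notation "a ⊙ b" := (tens (dO D) a b) (at level 40, left associativity).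
Local Notation "a ⊛ b" := (tens (dB D) a b) (at level 40, left associativity).
Local Notation "f ⊙' g" := (tensm (dO D) f g) (at level 40, left associativity).
Local Notation "f ⊛' g" := (tensm (dB D) f g) (at level 40, left associativity).
Local Notation DL := (dlaws D).
Local Notation LO := (mlaws (dO D)).
Local Notation LB := (mlaws (dB D)).
Local Notation OpO := (op_monoidal (dB D)).
Local Notation OpB := (op_monoidal (dO D)).
Local Notation opζ := (fun a b c d => dZeta D a c b d).

Lemma psi_comult (M : C) :
  (psi W M ⊛' cid A) · psi W (M ⊛ A) · (asci (dB D) M A A ⊙' cid A)
    · ((cid M ⊛' wΔ W) ⊙' cid A)
  = asci (dB D) (M ⊙ A) A A · (cid (M ⊙ A) ⊛' wΔ W) · psi W M.
Proof.
  unshelve epose proof (mixed_psi_mult (C := Cop C) (O := OpO) (B := OpB) (ζ := opζ)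
                          (μ := wΔ W) (Δ := wμ W) _ _ _ _ M) as H; rewrite /= ?comp_assoc.
  - by move=> *; symmetry; apply: (zeta_nat DL).
  - move=> a b c d e f /=; rewrite !comp_assoc.
    exact: (zeta_assoc_b_outer (zeta_assoc_b DL)).
  - exact: (Delta_coassoc W).
  - exact: (ax_WB W).
  - by move: H; rewrite /mixed_psi /psi /= ?comp_assoc.
Qed.

Lemma zeta_varpi_r_rui (a b : C) :
  (cid (a ⊙ b) ⊛' dVarpi D) · dZeta D a (munit (dB D)) b (munit (dB D))
    · (rui (dB D) a ⊙' rui (dB D) b)
  = rui (dB D) (a ⊙ b).
Proof.
  rewrite -[LHS]comp_idl -(ru_iso1 LB) -!comp_assoc.
  rewrite [ru _ _ · (_ · _)]comp_assoc [ru _ _ · _ · _]comp_assoc (zeta_varpi_r DL).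
  by rewrite -(tensm_comp LO) !(ru_iso2 LB) (tensm_id LO) comp_idr.
Qed.

Lemma psi_counit (M : C) :
  ru (dB D) (M ⊙ A) · (cid (M ⊙ A) ⊛' wε W) · psi W M
  = (cid M ⊙' wμ W) · asc (dO D) M A A · (ru (dB D) (M ⊙ A) ⊙' cid A)
    · ((cid (M ⊙ A) ⊛' wε W) ⊙' cid A) · (psi W M ⊙' cid A)
    · ((cid (M ⊛ A) ⊙' wη W) ⊙' cid A) · (rui (dO D) (M ⊛ A) ⊙' cid A).
Proof.
  unshelve epose proof (mixed_psi_unit (C := Cop C) (O := OpO) (B := OpB) (ζ := opζ)
    (δ := dVarpi D) (τ := dTau D) (μ := wΔ W) (η := wε W) (Δ := wμ W) (ε := wη W)
    _ _ _ _ _ _ _ _ _ _ _ M) as H; rewrite /= ?comp_assoc.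
  - by move=> *; symmetry; apply: (zeta_nat DL).
  - exact: (varpi_lunit DL).
  - move=> a b c d e f /=; rewrite !comp_assoc.
    exact: (zeta_assoc_b_outer (zeta_assoc_b DL)).
  - move=> a b c d e f /=; rewrite !comp_assoc.
    exact: (zeta_assoc_o_outer (zeta_assoc_o DL)).
  - move=> a b /=; rewrite !comp_assoc; exact: zeta_varpi_r_rui.
  - exact: (Delta_coassoc W).
  - exact: (Delta_rcounit W).
  - exact: (mu_assoc W).
  - exact: (mu_lunit W).
  - exact: (ax_WB W).
  - rewrite (tensm_compl (dO D)) ?comp_assoc.
    have := eq_sym (asc_nat LO (cid (munit (dB D))) (cid A) (wμ W)).
    rewrite (tensm_id LO) => asc_mu; rewrite_chain asc_mu.
    by have := ax_LLC W; rewrite ?comp_assoc.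
  - by move: H; rewrite /mixed_psi /psi /= ?comp_assoc.
Qed.

End Duality.

Theorem proposition5p1 (C : Cat) (D : Duoidal C) (A : C) (W : WeakBimonoid D A) :
  weak_mixed_distributive_law (wμ W) (wη W) (wΔ W) (wε W) (psi W).
Proof.
  have DL := dlaws D.
  split; [|split; [|split; [|split]]].
  - move=> M N f; exact: (mixed_psi_natural (zeta_nat DL)).
  - move=> M; exact: (mixed_psi_mult (zeta_nat DL) (zeta_assoc_o DL) (mu_assoc W) (ax_WB W)).
  - move=> M; exact: (mixed_psi_unit (zeta_nat DL) (delta_lcounit DL) (zeta_assoc_o DL)
      (zeta_assoc_b DL) (zeta_delta_r DL) (mu_assoc W) (mu_runit W) (Delta_coassoc W)
      (Delta_lcounit W) (ax_WB W) (ax_RRU W)).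
  - exact: psi_comult.
  - exact: psi_counit.
Qed.
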